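(* For every integer $n\ge5$, let $\Delta^3_n$ be the pure $3$-dimensional simplicial complex on the vertex set $\{\pm1,\dots,\pm n\}$ whose facets are the following four-element sets together with their antipodal images (images under $x\mapsto -x$): (a) $\{i,i+1,n-1,n\}$ and $\{-i,-i-1,n-1,n\}$ for $1\le i\le n-3$; (b) $\{1,-(n-2),n-1,n\}$, $\{1,-(n-2),-(n-1),n\}$, $\{1,-(n-2),-(n-1),-n\}$; (c) $\{i,i+1,\ell-2,\ell\}$ and $\{-i,-i-1,\ell-2,\ell\}$ for $5\le \ell\le n$ and $1\le i\le \ell-4$; (d) $\{1,-(\ell-3),\ell-2,\ell\}$, $\{1,-(\ell-3),-(\ell-1),\ell\}$, $\{-(\ell-3),-(\ell-2),-(\ell-1),\ell\}$ for $5\le\ell\le n$; (e) $\{1,2,-3,4\}$, $\{1,2,3,-4\}$, $\{1,-2,3,-4\}$. Then $\Delta^3_n$ (a centrally symmetric simplicial $3$-sphere) is not polytopal: there is no simplicial convex $4$-polytope whose boundary complex is combinatorially isomorphic to $\Delta^3_n$.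
   Context: $\{\Delta^3_n\}$ is Jockusch's family of centrally symmetric cs-$2$-neighborly simplicial $3$-spheres on $2n$ vertices, in the explicit facet description of Novik and Zheng (the facets in (a),(b) form the ball $B^{3,1}_n$). A simplicial $(d-1)$-sphere is polytopal if it is isomorphic to the boundary complex of a simplicial convex $d$-polytope; here $d=4$. *)

From HB Require Import structures.
From mathcomp Require Import all_boot all_order all_algebra.
From mathcomp Require Import reals.
Set Implicit Arguments. Unset Strict Implicit. Unset Printing Implicit Defensive.
Import Order.TTheory GRing.Theory Num.Theory.
Local Open Scope ring_scope.

(* Vertex type of Delta^3_n: (i, true) is the vertex +(i+1), (i, false) is -(i+1),
   so the vertex set is {+-1, ..., +-n}. *)
Definition vert (n : nat) : finType := ('I_n * bool)%type.

Definition vtoZ (n : nat) (x : vert n) : int :=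
  if x.2 then (x.1.+1)%:Z else - (x.1.+1)%:Z.


Definition base_facets (n : nat) : seq (seq int) :=
  let N := n%:Z in
  [seq [:: i%:Z; i%:Z + 1; N - 1; N] | i <- iota 1 (n - 3)] ++
  [seq [:: - i%:Z; - (i%:Z + 1); N - 1; N] | i <- iota 1 (n - 3)] ++
  [:: [:: 1; - (N - 2); N - 1; N];
      [:: 1; - (N - 2); - (N - 1); N];
      [:: 1; - (N - 2); - (N - 1); - N]] ++
  flatten [seq [seq [:: i%:Z; i%:Z + 1; l%:Z - 2; l%:Z] | i <- iota 1 (l - 4)] ++
               [seq [:: - i%:Z; - (i%:Z + 1); l%:Z - 2; l%:Z] | i <- iota 1 (l - 4)]
          | l <- iota 5 (n - 4)] ++
  flatten [seq [:: [:: 1; - (l%:Z - 3); l%:Z - 2; l%:Z];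
                   [:: 1; - (l%:Z - 3); - (l%:Z - 1); l%:Z];
                   [:: - (l%:Z - 3); - (l%:Z - 2); - (l%:Z - 1); l%:Z]]
          | l <- iota 5 (n - 4)] ++
  [:: [:: 1; 2; -3; 4]; [:: 1; 2; 3; -4]; [:: 1; -2; 3; -4]].

Definition all_facets (n : nat) : seq (seq int) :=
  base_facets n ++ [seq [seq - x | x <- F] | F <- base_facets n].

Definition Delta3 (n : nat) : {set {set vert n}} :=
  [set S : {set vert n} |
    has (fun F => S == [set x : vert n | vtoZ x \in F]) (all_facets n)].

(* Rank of the matrix whose rows are (p v, 1) for v in S: equals
   1 + dimension of the affine hull of p(S). *)
Definition aff_rank (R : realType) (V : finType) (p : V -> 'rV[R]_4)
    (S : {set V}) : nat :=
  \rank (\matrix_(i < #|S|) row_mx (p (enum_val i)) (1 : 'rV[R]_1)).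

Definition is_face_set (R : realType) (V : finType) (p : V -> 'rV[R]_4)
    (S : {set V}) : Prop :=
  exists (a : 'cV[R]_4) (b : R),
    [/\ a != 0,
        forall v, (p v *m a) 0 0 <= b
      & forall v, (v \in S) = ((p v *m a) 0 0 == b)].

(* A pure 3-dimensional simplicial complex on vertex set V with facet set Fs is
   polytopal (over R) if there are distinct points p v in R^4 such that the
   facets (3-dimensional faces) of the convex polytope conv(p(V)) are exactly the
   sets p(F), F in Fs.  When all members of Fs have 4 elements and every vertex
   lies in a facet, this says conv(p(V)) is a simplicial 4-polytope whose
   boundary complex is isomorphic (via p) to the complex. *)
Definition polytopal (R : realType) (V : finType) (Fs : {set {set V}}) : Prop :=
  exists p : V -> 'rV[R]_4,
    injective p /\
    forall S : {set V}, S \in Fs <-> (is_face_set p S /\ aff_rank p S = 4%N).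

(** Let [p] realize Δ³_n as the boundary complex of a 4-polytope, and write [[x1 ... x5]] for
    the determinant of the 5×5 matrix with rows [(p xi, 1)].  For a facet [F], the cofactor
    column of its four rows is a nonzero multiple of the normal of the supporting hyperplane
    of [F]; hence [[F x]] has the same nonzero sign for every vertex [x] outside [F].  These
    determinants also satisfy the three-term Grassmann–Plücker relations.  On the vertices
    ±1, ..., ±5, the facets of types (c) and (d) with ℓ = 5, those of type (e), and their
    antipodes are present for every n ≥ 5, and the two kinds of sign constraints they impose
    are contradictory: once the orientations of at most two facets are fixed, propagating
    the constraints always ends in a conflict.  A verified sign-propagation procedure checks
    this finite case analysis. *)
From HB Require Import structures.
From mathcomp Require Import all_boot all_order all_algebra reals.
From mathcomp Require Import fingroup perm.
From mathcomp Require Import ring lra zify.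
Set Implicit Arguments. Unset Strict Implicit. Unset Printing Implicit Defensive.
Import Order.TTheory GRing.Theory Num.Theory.
Local Open Scope ring_scope.

Section DetExpand.
Variable R : comPzRingType.

Fixpoint det_expand (n : nat) (f : nat -> nat -> R) : R :=
  if n is n'.+1 then
    foldr (fun j acc => (-1) ^+ j * f 0%N j * det_expand n' (fun i k => f i.+1 (bump j k)) + acc)
      0 (iota 0 n)
  else 1.

Lemma foldr_sumE (T : Type) (G : T -> R) (s : seq T) :
  foldr (fun j acc => G j + acc) 0 s = \sum_(j <- s) G j.
Proof. by rewrite -foldr_map foldrE big_map. Qed.

Lemma det_expandE n (f : nat -> nat -> R) :
  \det (\matrix_(i < n, k < n) f i k) = det_expand n f.
Proof.
elim: n f => [|n IHn] f; first by rewrite det_mx00.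
rewrite (expand_det_row _ ord0) [RHS]foldr_sumE -[iota 0 n.+1]/(index_iota 0 n.+1) big_mkord.
apply: eq_bigr => j _; rewrite mxE /cofactor -/det_expand -IHn add0n mulrCA mulrA.
by congr (_ * \det _); apply/matrixP => i k; rewrite !mxE.
Qed.
End DetExpand.

Lemma nth_cat_swap (T : Type) (x0 : T) (s1 s2 : seq T) a b k :
  nth x0 (s1 ++ b :: a :: s2) k =
  nth x0 (s1 ++ a :: b :: s2)
    (if k == size s1 then (size s1).+1 else if k == (size s1).+1 then size s1 else k).
Proof.
have nth_r t j : nth x0 (s1 ++ t) (size s1 + j)%N = nth x0 t j.
  by rewrite nth_cat ltnNge leq_addr addKn.
have nth_l t : nth x0 (s1 ++ t) (size s1) = nth x0 t 0 by rewrite -[size s1]addn0 nth_r.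
case: (ltnP k (size s1)) => [lt_k | /subnKC <-].
  by rewrite (ltn_eqF lt_k) (ltn_eqF (leqW lt_k)) !nth_cat lt_k.
case: (k - size s1)%N => [|[|j]].
- by rewrite addn0 eqxx -addn1 nth_l nth_r.
- by rewrite addn1 eqxx (gtn_eqF (ltnSn _)) nth_l -addn1 nth_r.
- have -> : ((size s1 + j.+2)%N == size s1) = false by lia.
  have -> : ((size s1 + j.+2)%N == (size s1).+1) = false by lia.
  by rewrite !nth_r.
Qed.

Section HomogeneousDet.
Variables (R : comPzRingType) (n : nat).

Definition hom (x : 'rV[R]_n) : 'rV[R]_(n + 1) := row_mx x 1.

Definition hom_rows k (xs : seq 'rV[R]_n) : 'M[R]_(k, n + 1) := \matrix_(i < k) hom (nth 0 xs i).

(* The junk value [0] on sequences of the wrong length makes [vdet_swap] unconditional. *)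
Definition vdet (xs : seq 'rV[R]_n) : R :=
  if size xs == (n + 1)%N then \det (hom_rows (n + 1) xs) else 0.

Lemma vdet_swap s1 s2 a b : vdet (s1 ++ a :: b :: s2) = - vdet (s1 ++ b :: a :: s2).
Proof.
rewrite /vdet !size_cat /=; case: eqP => [size_s | _]; last by rewrite oppr0.
have lt_i : (size s1 < n + 1)%N by rewrite -size_s; lia.
have lt_i1 : ((size s1).+1 < n + 1)%N by rewrite -size_s; lia.
pose i1 := Ordinal lt_i; pose i2 := Ordinal lt_i1.
have -> : hom_rows (n + 1) (s1 ++ b :: a :: s2) =
          xrow i1 i2 (hom_rows (n + 1) (s1 ++ a :: b :: s2)).
  apply/row_matrixP => k; rewrite xrowEsub row_rowsub !rowK nth_cat_swap.
  congr (hom (nth _ _ _)).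
  case: tpermP => [-> | -> | ne1 ne2] /=; rewrite ?eqxx // ?(gtn_eqF (ltnSn _)) //.
  have /negPf -> : (k : nat) != size s1 by apply/eqP => e; apply/ne1/val_inj.
  by have /negPf -> : (k : nat) != (size s1).+1 by apply/eqP => e; apply/ne2/val_inj.
rewrite xrowE det_mulmx det_perm odd_tperm.
by rewrite -val_eqE /= (ltn_eqF (ltnSn _)) expr1 mulN1r opprK.
Qed.
End HomogeneousDet.

Definition hom_entry (R : pzRingType) n (xs : seq 'rV[R]_n.+1) (i k : nat) : R :=
  if (k < n.+1)%N then (nth 0 xs i) 0 (inord k) else 1.

Lemma hom_rowsE (R : comPzRingType) n (xs : seq 'rV[R]_n.+1) :
  hom_rows (n.+1 + 1) xs = \matrix_(i, k) hom_entry xs i k.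
Proof.
apply/matrixP => i k; rewrite !mxE /hom_entry.
by case: splitP => k1 ek; rewrite ?ek ?inord_val // ord1 mxE.
Qed.

Lemma vdet_GP (R : comPzRingType) (a b c d e f g : 'rV[R]_4) :
  vdet [:: a; b; c; d; e] * vdet [:: a; b; c; f; g]
  - vdet [:: a; b; c; d; f] * vdet [:: a; b; c; e; g]
  + vdet [:: a; b; c; d; g] * vdet [:: a; b; c; e; f] = 0.
Proof. by rewrite /vdet /= !hom_rowsE !det_expandE /hom_entry /=; ring. Qed.

Section CofactorColumn.
Variables (R : comPzRingType) (m : nat).

Definition cofactor_col (M : 'M[R]_(m, m.+1)) : 'cV[R]_m.+1 :=
  \col_j cofactor (col_mx (0 : 'rV[R]_m.+1) M) 0 j.

Lemma det_col_mx_cofactor (M : 'M[R]_(m, m.+1)) (u : 'rV_m.+1) :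
  \det (col_mx u M) = (u *m cofactor_col M) 0 0.
Proof.
rewrite (expand_det_row _ 0) mxE; apply: eq_bigr => j _.
rewrite mxE; case: splitP => // i0 _; rewrite ord1 [cofactor_col M j 0]mxE /cofactor.
congr (_ * (_ * \det _)); apply/matrixP => i k.
by rewrite !mxE; case: splitP => // i1; rewrite ord1 lift0.
Qed.

Lemma mul_cofactor_col (M : 'M[R]_(m, m.+1)) : M *m cofactor_col M = 0.
Proof.
apply/matrixP => i k; rewrite ord1 [RHS]mxE.
have -> : (M *m cofactor_col M) i 0 = (row i M *m cofactor_col M) 0 0.
  by rewrite -row_mul [RHS]mxE.
rewrite -det_col_mx_cofactor.
apply: (@determinant_alternate _ _ _ 0 (rshift 1 i)) => [|j]; first by rewrite -val_eqE.
by rewrite [RHS](col_mxEd (row i M)) mxE; case: splitP => // i0 _; rewrite ord1 mxE.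
Qed.
End CofactorColumn.

Section KernelLine.
Variables (F : fieldType) (m : nat).

Lemma cofactor_col_colinear (M : 'M[F]_(m, m.+1)) (w : 'cV_m.+1) :
  \rank M = m -> w != 0 -> M *m w = 0 -> exists mu, cofactor_col M = mu *: w.
Proof.
move=> rankM nz_w Mw0.
have ker_w : (w^T <= kermx M^T)%MS by rewrite sub_kermx -trmx_mul Mw0 trmx0.
have ker_C : ((cofactor_col M)^T <= kermx M^T)%MS.
  by rewrite sub_kermx -trmx_mul mul_cofactor_col trmx0.
have rank_ker : \rank (kermx M^T) = 1%N by rewrite mxrank_ker mxrank_tr rankM subSnn.
have rank_w : \rank w^T = 1%N.
  by apply/eqP; rewrite eqn_leq rank_leq_row lt0n mxrank_eq0 trmx_eq0 nz_w.
have := mxrank_leqif_eq ker_w; rewrite rank_w rank_ker => /leqif_refl/andP[_ ker_sub_w].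
have /submxP[z Cz] := submx_trans ker_C ker_sub_w.
exists (z 0 0); rewrite -[cofactor_col M]trmxK Cz trmx_mul trmxK.
by rewrite {1}[z]mx11_scalar tr_scalar_mx mul_mx_scalar.
Qed.

Lemma det_col_mx_neq0 (M : 'M[F]_(m, m.+1)) (u : 'rV_m.+1) :
  \rank M = m -> ~~ (u <= M)%MS -> \det (col_mx u M) != 0.
Proof.
move=> rankM u_notin_M; rewrite -unitfE -unitmxE -row_full_unit /row_full.
have M_lt : (M < col_mx u M)%MS.
  by rewrite ltmxE col_mx_sub (negPf u_notin_M) andbT -addsmxE addsmxSr.
by have := rank_ltmx M_lt; rewrite rankM eqn_leq rank_leq_col.
Qed.
End KernelLine.

Lemma det_col_mx_same_side (F : realFieldType) m (M : 'M[F]_(m, m.+1)) (w : 'cV_m.+1)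
    (u v : 'rV_m.+1) :
  \rank M = m -> M *m w = 0 -> (u *m w) 0 0 < 0 -> (v *m w) 0 0 < 0 ->
  0 < \det (col_mx u M) * \det (col_mx v M).
Proof.
move=> rankM Mw0 uw_lt0 vw_lt0.
have nz_w : w != 0 by apply: contraTneq uw_lt0 => ->; rewrite mulmx0 mxE ltxx.
have [mu Cmu] := cofactor_col_colinear rankM nz_w Mw0.
have detE (z : 'rV_m.+1) : \det (col_mx z M) = mu * (z *m w) 0 0.
  by rewrite det_col_mx_cofactor Cmu -scalemxAr mxE.
have nz_mu : mu != 0.
  suff /(det_col_mx_neq0 rankM) : ~~ (u <= M)%MS.
    by rewrite detE mulf_eq0 negb_or => /andP[].
  by apply: contraTN uw_lt0 => /submxP[D ->]; rewrite -mulmxA Mw0 mulmx0 mxE ltxx.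
rewrite !detE mulrACA; apply: mulr_gt0; last by rewrite nmulr_rgt0.
by rewrite -expr2 exprn_even_gt0 //= nz_mu orbT.
Qed.

Lemma hom_mulmx_col (R : comPzRingType) n (x : 'rV[R]_n) (a : 'cV_n) (b : R) :
  (hom x *m col_mx a (- b%:M)) 0 0 = (x *m a) 0 0 - b.
Proof. by rewrite /hom mul_row_col mul1mx !mxE eqxx mulr1n. Qed.

Lemma vdet_cons (R : comPzRingType) (x : 'rV[R]_4) xs :
  size xs = 4%N -> vdet (x :: xs) = \det (col_mx (hom x) (hom_rows 4 xs)).
Proof.
move=> size_xs; rewrite /vdet /= size_xs /=; congr (\det _); apply/matrixP => i j.
by rewrite [RHS]mxE; case: (@splitP 1 4 i) => i0 ei; rewrite mxE ei ?ord1 // !mxE.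
Qed.

Lemma aff_rank_hom_rows (R : realType) (V : finType) (p : V -> 'rV[R]_4) (S : {set V})
    (vs : seq V) :
  S =i vs -> aff_rank p S = \rank (hom_rows (size vs) (map p vs)).
Proof.
move=> S_vs; apply/eqP; rewrite /aff_rank eqn_leq !mxrankS //.
  apply/row_subP => i; rewrite rowK.
  have : nth 0 (map p vs) i \in map p vs by apply: mem_nth; rewrite size_map.
  case/mapP=> v; rewrite -S_vs => Sv ->.
  have := row_sub (enum_rank_in Sv v) (\matrix_(i < #|S|) row_mx (p (enum_val i)) 1).
  by rewrite rowK enum_rankK_in.
apply/row_subP => i; rewrite rowK.
have /(nthP (enum_val i)) [k lt_k <-] : enum_val i \in vs by rewrite -S_vs enum_valP.
have := row_sub (Ordinal lt_k) (hom_rows (size vs) (map p vs)).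
by rewrite rowK (nth_map (enum_val i)).
Qed.

Lemma face_det_sign (R : realType) (V : finType) (p : V -> 'rV[R]_4) (S : {set V})
    (vs : seq V) :
  is_face_set p S -> aff_rank p S = 4%N -> size vs = 4%N -> S =i vs ->
  forall x y, x \notin S -> y \notin S ->
  0 < vdet (map p (x :: vs)) * vdet (map p (y :: vs)).
Proof.
move=> [a [b [_ below face]]] rankS size_vs S_vs x y xS yS.
pose w : 'cV[R]_(4 + 1) := col_mx a (- b%:M).
have out_neg z : z \notin S -> (hom (p z) *m w) 0 0 < 0.
  by rewrite hom_mulmx_col subr_lt0 lt_neqAle below andbT face.
rewrite !vdet_cons ?size_map //; apply: det_col_mx_same_side (out_neg x xS) (out_neg y yS).
  by have := aff_rank_hom_rows p S_vs; rewrite size_vs rankS.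
apply/row_matrixP => i; rewrite row_mul rowK row0; apply/rowP => k.
rewrite ord1 [RHS]mxE (hom_mulmx_col (nth 0 (map p vs) i)) (nth_map x) ?size_vs //.
by apply/eqP; rewrite subr_eq0 -face S_vs mem_nth ?size_vs.
Qed.

Section SignedSort.
Variables (T : Type) (leT : rel T).

Fixpoint insert_sign (x : T) (s : seq T) : seq T * bool :=
  if s is y :: s' then
    if leT x y then (x :: s, false)
    else let r := insert_sign x s' in (y :: r.1, ~~ r.2)
  else ([:: x], false).

Fixpoint sort_sign (s : seq T) : seq T * bool :=
  if s is x :: s' then
    let r := sort_sign s' in let r' := insert_sign x r.1 in (r'.1, r.2 (+) r'.2)
  else ([::], false).

Variables (R : pzRingType) (D : seq T -> R).
Hypothesis D_swap : forall s1 s2 a b, D (s1 ++ a :: b :: s2) = - D (s1 ++ b :: a :: s2).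

Lemma insert_signE p x s :
  D (p ++ x :: s) = (-1) ^+ (insert_sign x s).2 * D (p ++ (insert_sign x s).1).
Proof.
elim: s p => [|y s IHs] p /=; first by rewrite mul1r.
case: ifP => _ /=; first by rewrite mul1r.
by rewrite D_swap -cat_rcons IHs cat_rcons signrN mulNr.
Qed.

Lemma sort_signE_cat p s :
  D (p ++ s) = (-1) ^+ (sort_sign s).2 * D (p ++ (sort_sign s).1).
Proof.
elim: s p => [|x s IHs] p /=; first by rewrite mul1r.
by rewrite -cat_rcons IHs cat_rcons insert_signE signr_addb mulrA.
Qed.

Lemma sort_signE s : D s = (-1) ^+ (sort_sign s).2 * D (sort_sign s).1.
Proof. exact: (sort_signE_cat [::]). Qed.
End SignedSort.

Inductive trie := Trie of option bool & seq trie.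

Definition trie_val (t : trie) : option bool := let: Trie o _ := t in o.
Definition trie_children (t : trie) : seq trie := let: Trie _ ts := t in ts.
Definition empty_trie := Trie None [::].

Fixpoint trie_get (t : trie) (s : seq nat) : option bool :=
  if s is x :: s' then trie_get (nth empty_trie (trie_children t) x) s' else trie_val t.

Fixpoint trie_set (t : trie) (s : seq nat) (b : bool) : trie :=
  if s is x :: s' then
    let ts := trie_children t in
    Trie (trie_val t) (set_nth empty_trie ts x (trie_set (nth empty_trie ts x) s' b))
  else Trie (Some b) (trie_children t).

Lemma trie_get_empty s : trie_get empty_trie s = None.
Proof. by elim: s => [|x s IHs] //=; rewrite nth_nil. Qed.

Lemma trie_get_set t s b s' :
  trie_get (trie_set t s b) s' = if s' == s then Some b else trie_get t s'.
Proof.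
elim: s t s' => [|x s IHs] [o ts] [|y s'] //=.
by rewrite nth_set_nth /= eqseq_cons; case: eqP => [-> | _] //; apply: IHs.
Qed.

(* [(e, s, t) : sprod] stands for the signed product [(-1)^e D(s) D(t)]; [Pos m] says that
   [m] is positive and [Sum0 m1 m2 m3] that the three products sum to zero. *)
Definition sprod := (bool * seq nat * seq nat)%type.

Inductive constraint := Pos of sprod | Sum0 of sprod & sprod & sprod.

Definition constraint_code (c : constraint) : sprod + sprod * sprod * sprod :=
  match c with Pos m => inl m | Sum0 m1 m2 m3 => inr (m1, m2, m3) end.
Definition constraint_decode (x : sprod + sprod * sprod * sprod) : constraint :=
  match x with inl m => Pos m | inr (m1, m2, m3) => Sum0 m1 m2 m3 end.
Lemma constraint_codeK : cancel constraint_code constraint_decode.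
Proof. by case. Qed.
HB.instance Definition _ := Equality.copy constraint (can_type constraint_codeK).

Inductive outcome := Conflict | Nothing | Learn of seq nat & bool.

Definition sprod_sign (st : trie) (m : sprod) : option bool :=
  let: (e, s, t) := m in
  if (trie_get st s, trie_get st t) is (Some b, Some c) then Some (e (+) b (+) c) else None.

Definition deduce_pos (st : trie) (m : sprod) : outcome :=
  let: (e, s, t) := m in
  match trie_get st s, trie_get st t with
  | Some b, Some c => if e (+) b (+) c then Conflict else Nothing
  | Some b, None => Learn t (e (+) b)
  | None, Some c => Learn s (e (+) c)
  | None, None => Nothing
  end.

(* If two of the summands have the same sign, the third has the opposite one. *)
Definition deduce_sum (st : trie) (m1 m2 m3 : sprod) : outcome :=
  match sprod_sign st m1, sprod_sign st m2 with
  | Some b1, Some b2 =>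
    if b1 == b2 then let: (e, s, t) := m3 in deduce_pos st (e (+) ~~ b1, s, t) else Nothing
  | _, _ => Nothing
  end.

Definition orelse (o o' : outcome) : outcome := if o is Nothing then o' else o.

Definition deduce (st : trie) (c : constraint) : outcome :=
  match c with
  | Pos m => deduce_pos st m
  | Sum0 m1 m2 m3 =>
    orelse (deduce_sum st m1 m2 m3) (orelse (deduce_sum st m2 m3 m1) (deduce_sum st m3 m1 m2))
  end.

Fixpoint deduce_all (cs : seq constraint) (st : trie) (changed : bool) : option (bool * trie) :=
  if cs is c :: cs' then
    match deduce st c with
    | Conflict => None
    | Nothing => deduce_all cs' st changed
    | Learn s b => deduce_all cs' (trie_set st s b) true
    end
  else Some (changed, st).

Fixpoint propagate (rounds : nat) (cs : seq constraint) (st : trie) : option trie :=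
  if rounds is k.+1 then
    if deduce_all cs st false is Some (changed, st') then
      if changed then propagate k cs st' else Some st'
    else None
  else Some st.

(* The number of propagation rounds only affects completeness, not soundness. *)
Fixpoint refute (depth : nat) (cs : seq constraint) (pivots : seq (seq nat)) (st : trie) :=
  if propagate (size cs) cs st is Some st' then
    if depth is d.+1 then
      if [seq s <- pivots | trie_get st' s == None] is s :: _ then
        refute d cs pivots (trie_set st' s false) && refute d cs pivots (trie_set st' s true)
      else false
    else false
  else true.

Section Soundness.
Variables (R : realDomainType) (D : seq nat -> R).

Definition sprod_val (m : sprod) : R := let: (e, s, t) := m in (-1) ^+ e * (D s * D t).

Definition holds (c : constraint) : Prop :=
  match c with
  | Pos m => 0 < sprod_val m
  | Sum0 m1 m2 m3 => sprod_val m1 + sprod_val m2 + sprod_val m3 = 0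
  end.

Definition sound (st : trie) : Prop :=
  forall s b, trie_get st s = Some b -> 0 < (-1) ^+ b * D s.

Definition outcome_sound (o : outcome) : Prop :=
  match o with Conflict => False | Nothing => True | Learn s b => 0 < (-1) ^+ b * D s end.

Lemma signr_mul_gt0 (b c : bool) (x y : R) :
  0 < (-1) ^+ b * x -> 0 < (-1) ^+ c * y -> 0 < (-1) ^+ (b (+) c) * (x * y).
Proof. by move=> x_gt0 y_gt0; rewrite signr_addb mulrACA mulr_gt0. Qed.

Lemma signr_cancel_gt0 (b c : bool) (x y : R) :
  0 < (-1) ^+ b * (x * y) -> 0 < (-1) ^+ c * x -> 0 < (-1) ^+ (b (+) c) * y.
Proof.
move=> xy_gt0 x_gt0; rewrite -(pmulr_rgt0 _ x_gt0) mulrACA -signr_addb.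
by rewrite addbC -addbA addbb addbF.
Qed.

Lemma sprod_sign_sound st m b :
  sound st -> sprod_sign st m = Some b -> 0 < (-1) ^+ b * sprod_val m.
Proof.
case: m => [[e s] t] st_sound /=.
case Es: (trie_get st s) => [bs|] //; case Et: (trie_get st t) => [bt|] //= [<-].
rewrite -addbA signr_addb mulrACA -signr_addb addbb expr0 mul1r.
exact: signr_mul_gt0 (st_sound _ _ Es) (st_sound _ _ Et).
Qed.

Lemma deduce_pos_sound st m :
  sound st -> 0 < sprod_val m -> outcome_sound (deduce_pos st m).
Proof.
case: m => [[e s] t] st_sound /= m_gt0.
case Es: (trie_get st s) => [bs|]; case Et: (trie_get st t) => [bt|] //=.
- case: ifP => // odd_sign.
  have := sprod_sign_sound (m := (e, s, t)) st_sound; rewrite /= Es Et odd_sign.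
  by move=> /(_ _ erefl) /=; rewrite expr1 mulN1r oppr_gt0 ltNge (ltW m_gt0).
- exact: signr_cancel_gt0 m_gt0 (st_sound _ _ Es).
- by rewrite [D s * _]mulrC in m_gt0; apply: signr_cancel_gt0 m_gt0 (st_sound _ _ Et).
Qed.

Lemma deduce_sum_sound st m1 m2 m3 :
  sound st -> sprod_val m1 + sprod_val m2 + sprod_val m3 = 0 ->
  outcome_sound (deduce_sum st m1 m2 m3).
Proof.
move=> st_sound sum0; rewrite /deduce_sum.
case E1: (sprod_sign st m1) => [b1|] //; case E2: (sprod_sign st m2) => [b2|] //.
case: eqP => [eq_b | //]; subst b2; case: m3 sum0 => [[e s] t] sum0.
apply: deduce_pos_sound => //=.
move: (sprod_sign_sound st_sound E1) (sprod_sign_sound st_sound E2) sum0 => /=.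
by clear E1 E2; case: b1 e => [] [] /=; rewrite ?expr0 ?expr1 ?mul1r ?mulN1r; lra.
Qed.

Lemma orelse_sound o o' :
  outcome_sound o -> outcome_sound o' -> outcome_sound (orelse o o').
Proof. by case: o. Qed.

Lemma deduce_sound st c : sound st -> holds c -> outcome_sound (deduce st c).
Proof.
case: c => [m | m1 m2 m3] st_sound /=; first exact: deduce_pos_sound.
move=> sum0; apply: orelse_sound; first exact: deduce_sum_sound.
by apply: orelse_sound; apply: deduce_sum_sound; rewrite // -sum0; ring.
Qed.

Lemma sound_set st s (b : bool) : sound st -> 0 < (-1) ^+ b * D s -> sound (trie_set st s b).
Proof.
by move=> st_sound sb_gt0 s' b'; rewrite trie_get_set; case: eqP => [-> [<-] | _ /st_sound].
Qed.

Lemma deduce_all_sound cs st changed :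
  {in cs, forall c, holds c} -> sound st ->
  if deduce_all cs st changed is Some (_, st') then sound st' else False.
Proof.
elim: cs st changed => [|c cs IHcs] st changed //= cs_hold st_sound.
have cs_hold' : {in cs, forall c, holds c}.
  by move=> c' c'_in; apply: cs_hold; rewrite inE c'_in orbT.
have := deduce_sound st_sound (cs_hold c (mem_head c cs)).
case: (deduce st c) => [[] | _ | s b sb_gt0]; first exact: IHcs.
exact: IHcs (sound_set st_sound sb_gt0).
Qed.

Lemma propagate_sound k cs st :
  {in cs, forall c, holds c} -> sound st ->
  if propagate k cs st is Some st' then sound st' else False.
Proof.
elim: k st => [|k IHk] st //= cs_hold st_sound.
have := deduce_all_sound false cs_hold st_sound.
by case: (deduce_all cs st false) => [[[] st'] st'_sound|] //; apply: IHk.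
Qed.

Lemma refute_sound d cs pivots st :
  {in cs, forall c, holds c} -> {in pivots, forall s, D s != 0} -> sound st ->
  ~~ refute d cs pivots st.
Proof.
move=> cs_hold pivots_nz; elim: d st => [|d IHd] st st_sound /=;
  have := propagate_sound (size cs) cs_hold st_sound;
  case: (propagate _ cs st) => // st' st'_sound.
case E: [seq s <- pivots | trie_get st' s == None] => [//|s rest].
have : s \in [seq s <- pivots | trie_get st' s == None] by rewrite E mem_head.
rewrite mem_filter => /andP[_ /pivots_nz]; rewrite neq_lt negb_and => /orP[s_lt0 | s_gt0].
  by apply/orP; right; apply/IHd/sound_set; rewrite // expr1 mulN1r oppr_gt0.
by apply/orP; left; apply/IHd/sound_set; rewrite // mul1r.
Qed.
End Soundness.

Corollary refute_correct (R : realDomainType) (D : seq nat -> R) d cs pivots :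
  {in cs, forall c, holds D c} -> {in pivots, forall s, D s != 0} ->
  ~ refute d cs pivots empty_trie.
Proof.
move=> cs_hold pivots_nz; apply/negP/(refute_sound d cs_hold pivots_nz) => s b.
by rewrite trie_get_empty.
Qed.

Section Normalization.
Variables (R : realDomainType) (D : seq nat -> R).
Hypothesis D_swap : forall s1 s2 a b, D (s1 ++ a :: b :: s2) = - D (s1 ++ b :: a :: s2).

Definition sort_sprod (m : sprod) : sprod :=
  let: (e, s, t) := m in
  let s' := sort_sign leq s in let t' := sort_sign leq t in (e (+) s'.2 (+) t'.2, s'.1, t'.1).

Definition sort_constraint (c : constraint) : constraint :=
  match c with
  | Pos m => Pos (sort_sprod m)
  | Sum0 m1 m2 m3 => Sum0 (sort_sprod m1) (sort_sprod m2) (sort_sprod m3)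
  end.

Lemma sprod_val_sort m : sprod_val D (sort_sprod m) = sprod_val D m.
Proof.
case: m => [[e s] t] /=; rewrite [D s](sort_signE leq D_swap) [D t](sort_signE leq D_swap).
by rewrite !signr_addb mulrACA -!mulrA.
Qed.

Lemma holds_sort c : holds D c -> holds D (sort_constraint c).
Proof. by case: c => [m | m1 m2 m3] /=; rewrite !sprod_val_sort. Qed.
End Normalization.

(* The facets of types (c) and (d) with ℓ = 5, and of type (e). *)
Definition facets_l5 : seq (seq int) :=
  [:: [:: 1; 2; 3; 5]; [:: -1; -2; 3; 5]] ++
  [:: [:: 1; -2; 3; 5]; [:: 1; -2; -4; 5]; [:: -2; -3; -4; 5]] ++
  [:: [:: 1; 2; -3; 4]; [:: 1; 2; 3; -4]; [:: 1; -2; 3; -4]].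

Definition facets_pm5 : seq (seq int) :=
  facets_l5 ++ [seq [seq - x | x <- F] | F <- facets_l5].

(* Codes 0, ..., 9 of the vertices: [i < 5] codes [i + 1], [i >= 5] codes [4 - i]. *)
Definition code (z : int) : nat := if 0 < z then `|z|.-1 else (`|z| + 4)%N.
Definition label (i : nat) : int := if (i < 5)%N then i.+1%:Z else - (i - 4)%:Z.

Definition coded_facets : seq (seq nat) := [seq map code F | F <- facets_pm5].

Fixpoint ksubseqs {T : Type} (k : nat) (s : seq T) : seq (seq T) :=
  match k, s with
  | 0, _ => [:: [::]]
  | k'.+1, [::] => [::]
  | k'.+1, x :: s' => map (cons x) (ksubseqs k' s') ++ ksubseqs k s'
  end.

Definition outside (F : seq nat) : seq nat := [seq v <- iota 0 10 | v \notin F].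

Definition facet_constraints : seq constraint :=
  flatten [seq [seq Pos (false, x :: F, y :: F) | x <- outside F, y <- outside F]
          | F <- coded_facets].

Definition gp_constraint (t q : seq nat) : constraint :=
  let: (a, b, c) := (nth 0 t 0, nth 0 t 1, nth 0 t 2) in
  let: (d, e, f, g) := (nth 0 q 0, nth 0 q 1, nth 0 q 2, nth 0 q 3) in
  Sum0 (false, [:: a; b; c; d; e], [:: a; b; c; f; g])
       (true, [:: a; b; c; d; f], [:: a; b; c; e; g])
       (false, [:: a; b; c; d; g], [:: a; b; c; e; f]).

Definition gp_constraints : seq constraint :=
  [seq gp_constraint t q | t <- ksubseqs 3 (iota 0 10), q <- ksubseqs 4 (outside t)].

(* Sorting gives each set of five vertices a single key. *)
Definition pm5_constraints : seq constraint :=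
  [seq sort_constraint c | c <- facet_constraints ++ gp_constraints].

Definition pm5_pivots : seq (seq nat) :=
  [seq (sort_sign leq (x :: F)).1 | F <- coded_facets, x <- outside F].

Lemma refute_pm5 : refute 2 pm5_constraints pm5_pivots empty_trie.
Proof. by vm_compute. Qed.

Section BaseFacets.
Variables n l : nat.
Hypothesis l_range : (5 <= l <= n)%N.

Lemma l_in_iota : l \in iota 5 (n - 4).
Proof. by rewrite mem_iota; lia. Qed.

Lemma base_facets_c i : (0 < i <= l - 4)%N ->
  {subset [:: [:: i%:Z; i%:Z + 1; l%:Z - 2; l%:Z]; [:: - i%:Z; - (i%:Z + 1); l%:Z - 2; l%:Z]]
   <= base_facets n}.
Proof.
move=> i_range F F_in; rewrite /base_facets !mem_cat.
do 3!apply/orP/or_intror; apply/orP/or_introl.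
apply/flattenP; eexists; first exact: (map_f _ l_in_iota).
have i_in : i \in iota 1 (l - 4) by rewrite mem_iota; lia.
by move: F_in; rewrite !inE mem_cat => /orP[] /eqP ->; rewrite (map_f _ i_in) ?orbT.
Qed.

Lemma base_facets_d :
  {subset [:: [:: 1; - (l%:Z - 3); l%:Z - 2; l%:Z]; [:: 1; - (l%:Z - 3); - (l%:Z - 1); l%:Z];
              [:: - (l%:Z - 3); - (l%:Z - 2); - (l%:Z - 1); l%:Z]] <= base_facets n}.
Proof.
move=> F F_in; rewrite /base_facets !mem_cat.
do 4!apply/orP/or_intror; apply/orP/or_introl.
by apply/flattenP; eexists; first exact: (map_f _ l_in_iota).
Qed.
End BaseFacets.

Lemma base_facets_e n :
  {subset [:: [:: 1; 2; -3; 4]; [:: 1; 2; 3; -4]; [:: 1; -2; 3; -4]] <= base_facets n}.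
Proof. by move=> F F_in; rewrite /base_facets !mem_cat F_in !orbT. Qed.

Lemma facets_l5_sub m : {subset facets_l5 <= base_facets (5 + m)}.
Proof.
have l5 : (5 <= 5 <= 5 + m)%N by [].
move=> F; rewrite mem_cat => /orP[F_c | ]; last rewrite mem_cat => /orP[F_d | F_e].
- exact: (base_facets_c l5 (i := 1) isT F_c).
- exact: (base_facets_d l5 F_d).
- exact: base_facets_e F_e.
Qed.

Lemma facets_pm5_sub m : {subset facets_pm5 <= all_facets (5 + m)}.
Proof.
move=> F; rewrite mem_cat => /orP[F_in | /mapP[G G_in ->]]; rewrite mem_cat.
  by rewrite facets_l5_sub.
by rewrite (map_f _ (facets_l5_sub _ G_in)) orbT.
Qed.

Lemma coded_facetsK : map (map label) coded_facets = facets_pm5.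
Proof. by vm_compute. Qed.

Lemma coded_facets_lt10 : all (all (gtn 10)) coded_facets.
Proof. by vm_compute. Qed.

Lemma coded_facets_size : all (fun F => size F == 4%N) coded_facets.
Proof. by vm_compute. Qed.

Lemma label_inj : injective label.
Proof. by move=> i j; rewrite /label; do 2 case: ifP => ?; lia. Qed.

Lemma vtoZ_inj n : injective (@vtoZ n).
Proof.
move=> [i b] [j c]; rewrite /vtoZ /=.
by case: b; case: c => h; try (exfalso; lia); congr pair; apply: val_inj => /=; lia.
Qed.

Definition vx m (i : nat) : vert (5 + m) := (inord (i %% 5), (i < 5)%N).

Lemma vtoZ_vx m i : (i < 10)%N -> vtoZ (vx m i) = label i.
Proof.
move=> lt_i10; rewrite /vtoZ /vx /label /= inordK.
  by case: ifP => ?; lia.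
by have := ltn_pmod i (isT : (0 < 5)%N); lia.
Qed.

Section Realization.
Variables (R : realType) (m : nat) (p : vert (5 + m) -> 'rV[R]_4).
Hypothesis p_facets :
  forall S, S \in Delta3 (5 + m) -> is_face_set p S /\ aff_rank p S = 4%N.

Let D (s : seq nat) : R := vdet (map (p \o vx m) s).

Lemma D_swap s1 s2 a b : D (s1 ++ a :: b :: s2) = - D (s1 ++ b :: a :: s2).
Proof. by rewrite /D !map_cat vdet_swap. Qed.

Lemma facet_det_pos F x y :
  F \in coded_facets -> x \in outside F -> y \in outside F -> 0 < D (x :: F) * D (y :: F).
Proof.
move=> F_in x_out y_out.
have F_lt10 : all (gtn 10) F by apply: (allP coded_facets_lt10).
have /eqP size_F : size F == 4%N by apply: (allP coded_facets_size).
pose S := [set v : vert (5 + m) | vtoZ v \in map label F].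
have S_in : S \in Delta3 (5 + m).
  rewrite inE; apply/hasP; exists (map label F) => //.
  by apply: facets_pm5_sub; rewrite -coded_facetsK map_f.
have [face rank] := p_facets S_in.
have S_vx : S =i map (vx m) F.
  move=> v; rewrite inE; apply/mapP/mapP => [[i i_in vi] | [i i_in ->]].
    exists i => //; apply: vtoZ_inj; rewrite vi vtoZ_vx //; exact: (allP F_lt10).
  by exists i; rewrite // vtoZ_vx //; apply: (allP F_lt10).
have out_S z : z \in outside F -> vx m z \notin S.
  rewrite mem_filter mem_iota => /andP[z_notin /andP[_ z_lt]].
  by rewrite inE vtoZ_vx // (mem_map label_inj).
have := face_det_sign face rank _ S_vx (out_S x x_out) (out_S y y_out).
by rewrite size_map /= -!map_comp => /(_ size_F).
Qed.

Lemma pm5_constraints_hold : {in pm5_constraints, forall c, holds D c}.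
Proof.
move=> _ /mapP[c c_in ->]; apply: (holds_sort D_swap).
move: c_in; rewrite mem_cat => /orP[|].
  move=> /flattenP[cs /mapP[F F_in ->]] /allpairsP[[x y] [/= x_out y_out ->]].
  by rewrite /= mul1r; apply: facet_det_pos.
move=> /allpairsPdep[t [q [_ _ ->]]].
by rewrite /= expr0 expr1 !mul1r mulN1r /D /=; apply: vdet_GP.
Qed.

Lemma pm5_pivots_neq0 : {in pm5_pivots, forall s, D s != 0}.
Proof.
move=> _ /allpairsPdep[F [x [F_in x_out ->]]].
have := facet_det_pos F_in x_out x_out; rewrite [D (x :: F)](sort_signE leq D_swap).
by rewrite mulrACA -expr2 sqrr_sign mul1r lt0r mulf_eq0 orbb => /andP[].
Qed.
End Realization.

Theorem mainTheorem7 (R : realType) (n : nat) :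
  (5 <= n)%N -> ~ polytopal R (Delta3 n).
Proof.
case: n => [|[|[|[|[|m]]]]] // _ [p [_ p_polytopal]].
have p_facets S : S \in Delta3 (5 + m) -> is_face_set p S /\ aff_rank p S = 4%N.
  exact: (p_polytopal S).1.
exact: refute_correct (pm5_constraints_hold p_facets) (pm5_pivots_neq0 p_facets) refute_pm5.
Qed.
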